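(* Let $G$ be a finite group and $K$ an idempotent semifield. Let $V$ and $W$ be indecomposable representations of $G$ over $K$, and let $H_V$ and $H_W$ be subgroups of $G$ corresponding to $V$ and $W$ respectively (i.e. $H_V$ is the stabilizer in $G$ of some basis line of $V$, and $H_W$ the stabilizer of some basis line of $W$). Then the set of homomorphisms of representations $\phi:V\to W$ is in bijective correspondence with the set of all functions $H_V\backslash G/H_W\to K$, where $H_V\backslash G/H_W$ denotes the set of double cosets $H_V g H_W$, $g\in G$.
   Context: All semirings are commutative. A semifield is a semiring $K$ with $K\setminus\{0\}$ a multiplicative group; it is idempotent if $a+a=a$ for all $a$. A representation of $G$ over $K$ is a $K$-linear action of $G$ on a free module $K^n$ (equivalently a group homomorphism $G\to\mathrm{GL}_n(K)$). A homomorphism of representations $\phi:V\to W$ is a $K$-module homomorphism with $\phi(gv)=g\phi(v)$ for all $g\in G$, $v\in V$. A representation is indecomposable if it is not a direct sum of two nontrivial $G$-stable submodules. A basis line of a free $K$-module is a submodule spanned by one vector of a basis; the set of basis lines is independent of the basis and $G$ acts on it by $g\cdot\mathrm{span}(v)=\mathrm{span}(gv)$. *)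

From HB Require Import structures.
From mathcomp Require Import all_boot all_order all_fingroup all_algebra.
Set Implicit Arguments. Unset Strict Implicit. Unset Printing Implicit Defensive.
Import GRing.Theory.
Local Open Scope ring_scope.

(* Semifields: K \ {0} is a multiplicative group (1 <> 0 is built into
   comNzSemiRingType; commutativity/associativity come from the structure). *)
Definition semifield (K : comNzSemiRingType) : Prop :=
  forall a : K, a != 0 -> exists b : K, a * b = 1.

Definition idempotent_semiring (K : comNzSemiRingType) : Prop :=
  forall a : K, a + a = a.

Section Rep.
Variables (K : comNzSemiRingType) (gT : finGroupType) (G : {group gT}).

(* A representation of G on K^n (column vectors, left action g.v = rho g *m v)
   is a group homomorphism G -> GL_n(K); a monoid homomorphism from a group
   automatically lands in invertible matrices. *)
Definition is_rep (n : nat) (rho : gT -> 'M[K]_n) : Prop :=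
  rho 1%g = 1%:M /\
  forall g h, g \in G -> h \in G -> rho (g * h)%g = rho g *m rho h.

Definition submodule (n : nat) (U : 'cV[K]_n -> Prop) : Prop :=
  U 0 /\ (forall u v, U u -> U v -> U (u + v)) /\
  (forall (a : K) u, U u -> U (a *: u)).

Definition G_stable (n : nat) (rho : gT -> 'M[K]_n) (U : 'cV[K]_n -> Prop) :=
  forall g u, g \in G -> U u -> U (rho g *m u).

Definition nontrivial_sub (n : nat) (U : 'cV[K]_n -> Prop) :=
  exists u, U u /\ u <> 0.

Definition direct_sum (n : nat) (U1 U2 : 'cV[K]_n -> Prop) : Prop :=
  forall v, exists u1 u2, [/\ U1 u1, U2 u2, v = u1 + u2 &
    (forall w1 w2, U1 w1 -> U2 w2 -> v = w1 + w2 -> w1 = u1 /\ w2 = u2)].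

Definition indecomposable (n : nat) (rho : gT -> 'M[K]_n) : Prop :=
  (0 < n)%N /\
  ~ exists U1 U2, [/\ submodule U1 /\ submodule U2,
                      G_stable rho U1 /\ G_stable rho U2,
                      nontrivial_sub U1 /\ nontrivial_sub U2 &
                      direct_sum U1 U2].

Definition is_basis (n k : nat) (b : 'I_k -> 'cV[K]_n) : Prop :=
  forall v, exists c : 'I_k -> K, v = \sum_(i < k) c i *: b i /\
    forall c' : 'I_k -> K, v = \sum_(i < k) c' i *: b i -> forall i, c' i = c i.

Definition line_of (n : nat) (x : 'cV[K]_n) : 'cV[K]_n -> Prop :=
  fun y => exists a : K, y = a *: x.

Definition basis_line (n : nat) (L : 'cV[K]_n -> Prop) : Prop :=
  exists k (b : 'I_k -> 'cV[K]_n) (i : 'I_k),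
    is_basis b /\ forall y, L y <-> line_of (b i) y.

Definition stabilizer_of (n : nat) (rho : gT -> 'M[K]_n)
    (L : 'cV[K]_n -> Prop) (H : {set gT}) : Prop :=
  forall g, g \in H <->
    (g \in G /\ forall y, L y <-> exists x, L x /\ y = rho g *m x).

Definition corresponding_subgroup (n : nat) (rho : gT -> 'M[K]_n)
    (H : {group gT}) : Prop :=
  exists L, basis_line L /\ stabilizer_of rho L H.

Definition rep_hom (n m : nat) (rhoV : gT -> 'M[K]_n) (rhoW : gT -> 'M[K]_m)
    (phi : 'cV[K]_n -> 'cV[K]_m) : Prop :=
  [/\ forall u v, phi (u + v) = phi u + phi v,
      forall (a : K) u, phi (a *: u) = a *: phi u &
      (forall g v, g \in G -> phi (rhoV g *m v) = rhoW g *m phi v)].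
End Rep.

Definition dcosets (gT : finGroupType) (HV G HW : {set gT}) : {set {set gT}} :=
  [set (HV :* g) * HW | g in G]%g.

(* Over an idempotent semifield a sum vanishes only when every summand does,
   and there are no zero divisors, so every invertible matrix has exactly one
   nonzero entry in each column.  Hence a representation on K^n permutes the
   coordinate lines K e_j, the basis lines of K^n are exactly these coordinate
   lines, and indecomposability makes G act transitively on them.  The
   stabilizer H of the line K e_j acts on it by a character, which is trivial
   since a^N = 1 forces a = 1 (a fixes the nonzero sum 1 + a + ... + a^(N-1)).
   A homomorphism phi is determined by phi(e_jV), i.e. by the function
   x |-> (x^-1 phi(e_jV))_jW on G, which is left H_V- and right H_W-invariant;
   conversely each function on double cosets is realised by an explicit sum
   over G x G, in which idempotency lets a repeated term count only once. *)

From HB Require Import structures.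
From mathcomp Require Import all_boot all_order all_fingroup all_algebra.
From Stdlib Require Import FunctionalExtensionality ProofIrrelevance.
Set Implicit Arguments. Unset Strict Implicit. Unset Printing Implicit Defensive.
Import GRing.Theory.
Local Open Scope ring_scope.

Section DoubleCosets.
Variables (gT : finGroupType) (G A B : {group gT}).

Lemma dcoset_mul a x b : a \in A -> b \in B -> (A :* (a * x * b) * B = A :* x * B)%g.
Proof. by move=> aA bB; rewrite !rcosetM rcoset_id // -mulgA lcoset_id. Qed.

Lemma mem_dcosets x : x \in G -> (A :* x * B)%g \in dcosets A G B.
Proof. by move=> xG; apply/imsetP; exists x. Qed.

Lemma repr_dcoset x :
  exists a b, [/\ a \in A, b \in B & repr (A :* x * B) = a * x * b]%g.
Proof.
have x_dc : x \in (A :* x * B)%g.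
  by apply/mulsgP; exists x 1%g; rewrite ?rcoset_refl ?group1 ?mulg1.
by have /mulsgP[_ b /rcosetP[a aA ->] bB ->] := mem_repr _ x_dc; exists a, b.
Qed.

Lemma dcosets_repr D : A \subset G -> B \subset G -> D \in dcosets A G B ->
  repr D \in G /\ (A :* repr D * B)%g = D.
Proof.
move=> sAG sBG /imsetP[x xG ->]; have [a [b [aA bB ->]]] := repr_dcoset x.
split; last exact: dcoset_mul.
by rewrite !groupM // ?(subsetP sAG a) ?(subsetP sBG b).
Qed.

End DoubleCosets.

Lemma rep_hom_sum (K : comNzSemiRingType) (gT : finGroupType) (G : {group gT})
    n m (rhoV : gT -> 'M[K]_n) (rhoW : gT -> 'M[K]_m) phi :
  rep_hom G rhoV rhoW phi -> forall I (r : seq I) (P : pred I) (F : I -> 'cV_n),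
  phi (\sum_(i <- r | P i) F i) = \sum_(i <- r | P i) phi (F i).
Proof.
case=> phiD phiZ _ I r P F.
have phi0 : phi 0 = 0 by rewrite -(scale0r (0 : 'cV[K]_n)) phiZ scale0r.
exact: big_morph.
Qed.

Section IdempotentSemifield.
Variable K : comNzSemiRingType.
Hypothesis K_semifield : semifield K.
Hypothesis K_idem : idempotent_semiring K.

Lemma addr_eq0l (a b : K) : a + b = 0 -> a = 0.
Proof.
move=> ab0; have -> : a = a + (a + b) by rewrite ab0 addr0.
by rewrite addrA K_idem ab0.
Qed.

Lemma sumr_eq0P (I : finType) (F : I -> K) :
  \sum_i F i = 0 -> forall i, F i = 0.
Proof. by move=> + i; rewrite (bigD1 i) //=; apply: addr_eq0l. Qed.

Lemma sumr_neq0P (I : finType) (F : I -> K) :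
  \sum_i F i != 0 -> exists i, F i != 0.
Proof.
move=> F0; have [i Fi|F_eq0] := pickP (fun i => F i != 0); first by exists i.
by move: F0; rewrite big1 ?eqxx // => i _; apply/eqP/negbFE/F_eq0.
Qed.

Lemma mulr_neq0 (a b : K) : a != 0 -> b != 0 -> a * b != 0.
Proof.
move=> a0 /eqP b0; apply/eqP => ab0; have [c ac1] := K_semifield a0.
by apply: b0; rewrite -[b]mul1r -ac1 mulrAC ab0 mul0r.
Qed.

Lemma mulrI_neq0 (a : K) : a != 0 -> injective ( *%R a).
Proof.
move=> a0 b c abc; have [d ad1] := K_semifield a0.
by rewrite -[b]mul1r -[c]mul1r -ad1 mulrAC abc mulrAC.
Qed.

Lemma mulrn_idem (c : K) k : c *+ k.+1 = c.
Proof. by elim: k => // k IHk; rewrite mulrS IHk K_idem. Qed.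

Lemma sumr_const_idem (I : finType) (P : pred I) (c : K) :
  (exists i, P i) -> \sum_(i | P i) c = c.
Proof.
case=> i Pi; rewrite sumr_const.
have : (0 < #|P|)%N by apply/card_gt0P; exists i.
by case: #|P| => // k _; apply: mulrn_idem.
Qed.

Lemma expr_eq1 (a : K) N : (0 < N)%N -> a ^+ N = 1 -> a = 1.
Proof.
case: N => // N _ aN1; pose s := \sum_(i < N.+1) a ^+ i.
have as_s : a * s = s.
  rewrite mulr_sumr; under eq_bigr do rewrite -exprS.
  by rewrite big_ord_recr /= aN1 /s big_ord_recl /= expr0 addrC.
have s_neq0 : s != 0.
  by apply/eqP => /sumr_eq0P/(_ ord0)/eqP; rewrite expr0 oner_eq0.
by apply: (mulrI_neq0 s_neq0); rewrite mulr1 mulrC.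
Qed.

(** * Invertible matrices are monomial *)

Lemma unitmx_col_support n (A B : 'M[K]_n) :
  A *m B = 1%:M -> B *m A = 1%:M ->
  forall q, exists p, A p q != 0 /\ forall p', p' != p -> A p' q = 0.
Proof.
move=> AB1 BA1 q.
have [p BA_neq0] : exists p, B q p * A p q != 0.
  apply: sumr_neq0P; move/matrixP/(_ q q): BA1.
  by rewrite !mxE eqxx mulr1n => ->; apply: oner_neq0.
exists p; split; first by apply: contraNneq BA_neq0 => ->; rewrite mulr0.
move=> p' p'p; have AB_p'p : \sum_l A p' l * B l p = 0.
  by move/matrixP/(_ p' p): AB1; rewrite !mxE (negbTE p'p) mulr0n.
have := sumr_eq0P AB_p'p q; apply: contra_eq => Ap'q.
by apply: mulr_neq0 => //; apply: contraNneq BA_neq0 => ->; rewrite mul0r.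
Qed.

(* The default q is junk: columns of invertible matrices are nonzero. *)
Definition mono_index n (A : 'M[K]_n) (q : 'I_n) : 'I_n :=
  odflt q [pick p | A p q != 0].

Section MonomialMatrix.
Variables (n : nat) (A B : 'M[K]_n).
Hypotheses (AB1 : A *m B = 1%:M) (BA1 : B *m A = 1%:M).

Lemma mono_index_neq0 q : A (mono_index A q) q != 0.
Proof.
rewrite /mono_index; case: pickP => [p|A_eq0] //=.
by have [p [+ _]] := unitmx_col_support AB1 BA1 q; rewrite A_eq0.
Qed.

Lemma mono_index_eq0 p q : p != mono_index A q -> A p q = 0.
Proof.
have [p0 [Ap0_neq0 A_eq0]] := unitmx_col_support AB1 BA1 q.
have -> : mono_index A q = p0.
  by apply/eqP; apply: contraNT (mono_index_neq0 q) => /A_eq0 ->.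
exact: A_eq0.
Qed.

Lemma mono_indexE p q : A p q != 0 -> mono_index A q = p.
Proof.
by case: (eqVneq p (mono_index A q)) => // /mono_index_eq0 ->; rewrite eqxx.
Qed.

Lemma mono_index_inj : injective (mono_index A).
Proof.
have ABT1 : A^T *m B^T = 1%:M by rewrite -trmx_mul BA1 trmx1.
have BAT1 : B^T *m A^T = 1%:M by rewrite -trmx_mul AB1 trmx1.
move=> q q' eq_qq'.
have [r [_ AT_eq0]] := unitmx_col_support ABT1 BAT1 (mono_index A q).
have supp_r s : A (mono_index A q) s != 0 -> s = r.
  by apply: contraNeq => /AT_eq0; rewrite mxE => ->; rewrite eqxx.
by rewrite (supp_r q (mono_index_neq0 q)) (supp_r q') // eq_qq' mono_index_neq0.
Qed.

Lemma mulmx_mono_index k (C : 'M[K]_(n, k)) r q :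
  (A *m C) (mono_index A r) q = A (mono_index A r) r * C r q.
Proof.
rewrite mxE (bigD1 r) //= big1 ?addr0 // => r' r'r.
have [->|Ar'_neq0] := eqVneq (A (mono_index A r) r') 0; first by rewrite mul0r.
by move: r'r; rewrite (mono_index_inj (mono_indexE Ar'_neq0)) eqxx.
Qed.

Lemma mulmx_delta_mono q :
  A *m delta_mx q 0 = A (mono_index A q) q *: (delta_mx (mono_index A q) 0 : 'cV_n).
Proof.
rewrite -colE; apply/matrixP => p z; rewrite !mxE ord1 eqxx andbT.
have [->|pq] := eqVneq p (mono_index A q); first by rewrite mulr1.
by rewrite mulr0 mono_index_eq0.
Qed.

End MonomialMatrix.

Lemma basis_vector_delta n k (b : 'I_k -> 'cV[K]_n) i :
  is_basis b -> exists2 j, b i j 0 != 0 & b i = b i j 0 *: delta_mx j 0.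
Proof.
move=> b_basis.
have [c c_delta] : exists c : 'I_n -> 'I_k -> K,
    forall j, delta_mx j 0 = \sum_l c j l *: b l.
  apply: (@fin_all_exists _ (fun=> 'I_k -> K)
            (fun j cj => delta_mx j 0 = \sum_l cj l *: b l)).
  by move=> j; have [cj [-> _]] := b_basis (delta_mx j 0); exists cj.
have [c0 [_ coord_uniq]] := b_basis (b i).
have bi_self : b i = \sum_l ((i == l)%:R : K) *: b l.
  rewrite (bigD1 i) //= eqxx scale1r big1 ?addr0 // => l li.
  by rewrite eq_sym (negbTE li) scale0r.
have bi_expand : b i = \sum_l (\sum_j b i j 0 * c j l) *: b l.
  rewrite {1}[b i]matrix_sum_delta.
  under eq_bigr do rewrite big_ord1 c_delta scaler_sumr.
  rewrite exchange_big; apply: eq_bigr => l _; rewrite scaler_suml.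
  by apply: eq_bigr => j _; rewrite scalerA.
have sum_eq1 : \sum_j b i j 0 * c j i = 1.
  move: (coord_uniq _ bi_expand i) (coord_uniq _ bi_self i) => /= -> <-.
  by rewrite eqxx.
have [j bc_neq0] : exists j, b i j 0 * c j i != 0.
  by apply: sumr_neq0P; rewrite sum_eq1 oner_neq0.
have bij_neq0 : b i j 0 != 0 by apply: contraNneq bc_neq0 => ->; rewrite mul0r.
have cji_neq0 : c j i != 0 by apply: contraNneq bc_neq0 => ->; rewrite mulr0.
exists j => //; apply/matrixP => p z; rewrite ord1 !mxE eqxx andbT.
have [->|pj] := eqVneq p j; first by rewrite mulr1.
rewrite mulr0; have : (delta_mx j 0 : 'cV[K]_n) p 0 = 0 by rewrite mxE (negbTE pj).
rewrite c_delta summxE => /sumr_eq0P/(_ i); rewrite mxE.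
by apply: contra_eq => bip_neq0; apply: mulr_neq0.
Qed.

Lemma line_of_scale n (x : 'cV[K]_n) a :
  a != 0 -> forall y, line_of (a *: x) y <-> line_of x y.
Proof.
move=> a_neq0 y; split=> [[c ->]|[c ->]]; first by exists (c * a); rewrite scalerA.
have [d ad1] := K_semifield a_neq0; exists (c * d).
by rewrite scalerA -mulrA (mulrC d) ad1 mulr1.
Qed.

Lemma basis_lineP n (L : 'cV[K]_n -> Prop) :
  basis_line L -> exists j, forall y, L y <-> line_of (delta_mx j 0) y.
Proof.
case=> k [b [i [b_basis L_bi]]].
have [j bij_neq0 bi_delta] := basis_vector_delta i b_basis.
exists j => y; apply: (iff_trans (L_bi y)); rewrite bi_delta; exact: line_of_scale.
Qed.

Definition coord_sub n (O : {set 'I_n}) (v : 'cV[K]_n) : Prop :=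
  forall p, p \notin O -> v p 0 = 0.

Lemma coord_sub_submodule n (O : {set 'I_n}) : submodule (coord_sub O).
Proof.
split; first by move=> p _; rewrite mxE.
by split=> [u v u0 v0 | a u u0] p pO; rewrite mxE ?u0 ?v0 ?addr0 ?mulr0.
Qed.

Lemma coord_sub_delta n (O : {set 'I_n}) p : p \in O -> coord_sub O (delta_mx p 0).
Proof.
move=> pO q; rewrite mxE; have [->|_] := eqVneq q p; last by [].
by rewrite pO.
Qed.

Lemma delta_neq0 n (p : 'I_n) : (delta_mx p 0 : 'cV[K]_n) != 0.
Proof. by apply/eqP => /matrixP/(_ p 0)/eqP; rewrite !mxE !eqxx oner_eq0. Qed.

Lemma coord_sub_direct n (O : {set 'I_n}) : direct_sum (coord_sub O) (coord_sub (~: O)).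
Proof.
move=> v; exists (\col_p (if p \in O then v p 0 else 0)).
exists (\col_p (if p \in O then 0 else v p 0)); split.
- by move=> p pO; rewrite mxE (negbTE pO).
- by move=> p; rewrite inE negbK mxE => ->.
- by apply/matrixP => p z; rewrite ord1 !mxE; case: (p \in O); rewrite ?addr0 ?add0r.
move=> w1 w2 w1O w2O ->; split; apply/matrixP => p z; rewrite ord1 !mxE;
  have [pO|pO] := boolP (p \in O).
- by rewrite w2O ?addr0 // inE pO.
- by rewrite w1O.
- by rewrite w2O // inE pO.
- by rewrite w1O ?add0r.
Qed.

(** * Representations permute the coordinate lines *)

Section Representation.
Variables (gT : finGroupType) (G : {group gT}) (n : nat) (rho : gT -> 'M[K]_n).
Hypothesis rep : is_rep G rho.

Local Notation e j := (delta_mx j 0 : 'cV[K]_n).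

Lemma rep1 : rho 1%g = 1%:M.
Proof. by case: rep. Qed.

Lemma repM g h : g \in G -> h \in G -> rho (g * h)%g = rho g *m rho h.
Proof. by case: rep => _; apply. Qed.

Lemma rep_mulgV g : g \in G -> rho g *m rho g^-1 = 1%:M.
Proof. by move=> gG; rewrite -repM ?groupV // mulgV rep1. Qed.

Lemma rep_mulVg g : g \in G -> rho g^-1 *m rho g = 1%:M.
Proof. by move=> gG; rewrite -repM ?groupV // mulVg rep1. Qed.

Definition rep_act g q := mono_index (rho g) q.

Section Element.
Variables (g : gT) (gG : g \in G).

Lemma rep_act_neq0 q : rho g (rep_act g q) q != 0.
Proof. exact: mono_index_neq0 (rep_mulgV gG) (rep_mulVg gG) q. Qed.

Lemma rep_actE p q : rho g p q != 0 -> rep_act g q = p.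
Proof. exact: mono_indexE (rep_mulgV gG) (rep_mulVg gG) p q. Qed.

Lemma mulmx_rep_act k (C : 'M[K]_(n, k)) r q :
  (rho g *m C) (rep_act g r) q = rho g (rep_act g r) r * C r q.
Proof. exact: (mulmx_mono_index (rep_mulgV gG) (rep_mulVg gG)). Qed.

Lemma rep_delta q : rho g *m e q = rho g (rep_act g q) q *: e (rep_act g q).
Proof. exact: mulmx_delta_mono (rep_mulgV gG) (rep_mulVg gG) q. Qed.

End Element.

Lemma rep_act1 q : rep_act 1%g q = q.
Proof. by apply: rep_actE; rewrite ?group1 // rep1 mxE eqxx oner_neq0. Qed.

Lemma rep_actM g h q : g \in G -> h \in G ->
  rep_act (g * h)%g q = rep_act g (rep_act h q).
Proof.
move=> gG hG; apply: rep_actE; first by rewrite groupM.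
by rewrite repM // mulmx_rep_act // mulr_neq0 ?rep_act_neq0.
Qed.

Lemma rep_actK g : g \in G -> cancel (rep_act g) (rep_act g^-1).
Proof. by move=> gG q; rewrite -rep_actM ?groupV // mulVg rep_act1. Qed.

Lemma rep_delta_orbit g j : g \in G -> exists d, e (rep_act g j) = d *: (rho g *m e j).
Proof.
move=> gG; have [d cd1] := K_semifield (rep_act_neq0 gG j).
by exists d; rewrite rep_delta // scalerA mulrC cd1 scale1r.
Qed.

Lemma orbit_coord_inj j : (forall k, exists2 t, t \in G & rep_act t j = k) ->
  forall w1 w2 : 'cV[K]_n,
  {in G, forall t, (rho t^-1 *m w1) j 0 = (rho t^-1 *m w2) j 0} -> w1 = w2.
Proof.
move=> j_trans w1 w2 w12; apply/matrixP => l z; rewrite ord1.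
have [t tG <-] := j_trans l; have tVG : t^-1%g \in G by rewrite groupV.
have coord_t w : (rho t^-1 *m w) j 0 = rho t^-1 j (rep_act t j) * w (rep_act t j) 0.
  by have := mulmx_rep_act tVG w (rep_act t j) 0; rewrite rep_actK.
have t_neq0 : rho t^-1 j (rep_act t j) != 0.
  by have := rep_act_neq0 tVG (rep_act t j); rewrite rep_actK.
by apply: (mulrI_neq0 t_neq0); rewrite -!coord_t w12.
Qed.

Lemma coord_sub_stable (O : {set 'I_n}) :
  (forall g p, g \in G -> (rep_act g p \in O) = (p \in O)) ->
  G_stable G rho (coord_sub O).
Proof.
move=> O_closed g u gG u0 p pO; rewrite mxE big1 // => r _.
have [->|gpr_neq0] := eqVneq (rho g p r) 0; first by rewrite mul0r.
by rewrite u0 ?mulr0 // -(O_closed g r gG) (rep_actE gG gpr_neq0).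
Qed.

Lemma indecomposable_transitive j : indecomposable G rho ->
  forall k, exists2 t, t \in G & rep_act t j = k.
Proof.
case=> _ no_split k; pose O := [set rep_act g j | g in G].
have [/imsetP[t tG ->]|kO] := boolP (k \in O); first by exists t.
have O_closed g p : g \in G -> (rep_act g p \in O) = (p \in O).
  move=> gG; apply/imsetP/imsetP => [[t tG gp_t]|[t tG ->]].
    exists (g^-1 * t)%g; first by rewrite groupM ?groupV.
    by rewrite rep_actM ?groupV // -gp_t rep_actK.
  by exists (g * t)%g; rewrite ?groupM ?rep_actM.
have jO : j \in O by apply/imsetP; exists 1%g; rewrite ?rep_act1.
exfalso; apply: no_split; exists (coord_sub O), (coord_sub (~: O)); split.
- by split; apply: coord_sub_submodule.
- by split; apply: coord_sub_stable => // g p gG; rewrite !inE O_closed.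
- split; [exists (e j) | exists (e k)]; split; try exact/eqP/delta_neq0.
    exact: coord_sub_delta.
  by apply: coord_sub_delta; rewrite inE.
- exact: coord_sub_direct.
Qed.

Lemma stabilizer_coord_line j L (H : {set gT}) :
  (forall y, L y <-> line_of (e j) y) -> stabilizer_of G rho L H ->
  forall g, (g \in H) = (g \in G) && (rep_act g j == j).
Proof.
move=> L_line H_stab g; apply/idP/andP => [/H_stab[gG gL]|[gG /eqP gj]].
  split=> //; have /gL[x [/L_line[a ->] ej_eq]] : L (e j).
    by apply/L_line; exists 1; rewrite scale1r.
  apply: contraT => gj_neq; move/matrixP/(_ j 0): ej_eq.
  rewrite -scalemxAr rep_delta // scalerA !mxE !eqxx andbT [j == _]eq_sym.
  by rewrite (negbTE gj_neq) mulr0 => /eqP; rewrite oner_eq0.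
apply/H_stab; split=> // y.
have gj_neq0 : rho g j j != 0 by rewrite -{1}gj rep_act_neq0.
have ge_j : rho g *m e j = rho g j j *: e j by rewrite rep_delta // gj.
have [d cd1] := K_semifield gj_neq0.
split=> [/L_line[a ->]|[x [/L_line[a ->] ->]]].
  exists ((a * d) *: e j); split; first by apply/L_line; exists (a * d).
  by rewrite -scalemxAr ge_j scalerA -mulrA (mulrC d) cd1 mulr1.
by apply/L_line; exists (a * rho g j j); rewrite -scalemxAr ge_j scalerA.
Qed.

Section CoordinateStabilizer.
Variables (H : {set gT}) (j : 'I_n).
Hypothesis H_stab : forall g, (g \in H) = (g \in G) && (rep_act g j == j).

Lemma stab_mem h : h \in H -> h \in G.
Proof. by rewrite H_stab => /andP[]. Qed.

Lemma stab_act h : h \in H -> rep_act h j = j.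
Proof. by rewrite H_stab => /andP[_ /eqP]. Qed.

Lemma stab_diag1 h : h \in H -> rho h j j = 1.
Proof.
move=> hH; have hG := stab_mem hH; have hj := stab_act hH.
have rho_expg N : rho (h ^+ N)%g j j = rho h j j ^+ N.
  elim: N => [|N IHN]; first by rewrite expg0 rep1 mxE eqxx.
  by rewrite expgS repM ?groupX // -{1}hj mulmx_rep_act // hj IHN exprS.
by apply: (expr_eq1 (order_gt0 h)); rewrite -rho_expg expg_order rep1 mxE eqxx.
Qed.

Lemma stab_fix h : h \in H -> rho h *m e j = e j.
Proof.
by move=> hH; rewrite rep_delta ?stab_mem // stab_act // stab_diag1 ?scale1r.
Qed.

Lemma stab_row h k (C : 'M[K]_(n, k)) q : h \in H -> (rho h *m C) j q = C j q.
Proof.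
move=> hH; have := mulmx_rep_act (stab_mem hH) C j q.
by rewrite stab_act // stab_diag1 // mul1r.
Qed.

Lemma rep_delta_diag g : g \in G -> (rho g *m e j) j 0 = if g \in H then 1 else 0.
Proof.
move=> gG; rewrite rep_delta // !mxE eqxx andbT H_stab gG /= eq_sym.
have [gj|_] := eqP; last by rewrite mulr0.
by rewrite mulr1 gj stab_diag1 // H_stab gG gj eqxx.
Qed.

End CoordinateStabilizer.
End Representation.

(** * Homomorphisms and double cosets *)

Section Homomorphisms.
Variables (gT : finGroupType) (G : {group gT}) (n m : nat).
Variables (rV : gT -> 'M[K]_n) (rW : gT -> 'M[K]_m) (HV HW : {group gT}).
Variables (jV : 'I_n) (jW : 'I_m).
Hypotheses (repV : is_rep G rV) (repW : is_rep G rW).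
Hypothesis HV_stab : forall g, (g \in HV) = (g \in G) && (rep_act rV g jV == jV).
Hypothesis HW_stab : forall g, (g \in HW) = (g \in G) && (rep_act rW g jW == jW).
Hypothesis jV_trans : forall k, exists2 t, t \in G & rep_act rV t jV = k.
Hypothesis jW_trans : forall k, exists2 t, t \in G & rep_act rW t jW = k.

Local Notation eV j := (delta_mx j 0 : 'cV[K]_n).
Local Notation eW j := (delta_mx j 0 : 'cV[K]_m).
Local Notation DC := {D : {set gT} | D \in dcosets HV G HW}.
Local Notation hom := (rep_hom G rV rW).

Lemma rep_hom_eq phi1 phi2 : hom phi1 -> hom phi2 ->
  phi1 (eV jV) = phi2 (eV jV) -> phi1 =1 phi2.
Proof.
move=> hom1 hom2 phi12 v.
have [_ phi1Z phi1_eqv] := hom1; have [_ phi2Z phi2_eqv] := hom2.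
have delta12 k : phi1 (eV k) = phi2 (eV k).
  have [t tG <-] := jV_trans k; have [d ->] := rep_delta_orbit repV jV tG.
  by rewrite phi1Z phi2Z phi1_eqv // phi2_eqv // phi12.
rewrite [v]matrix_sum_delta; under eq_bigr do rewrite big_ord1.
rewrite (rep_hom_sum hom1) (rep_hom_sum hom2); apply: eq_bigr => k _.
by rewrite phi1Z phi2Z delta12.
Qed.

Definition hom_coef (phi : 'cV[K]_n -> 'cV[K]_m) (x : gT) : K :=
  (rW x^-1 *m phi (eV jV)) jW 0.

Lemma hom_coef_inj phi1 phi2 : hom phi1 -> hom phi2 ->
  {in G, hom_coef phi1 =1 hom_coef phi2} -> phi1 =1 phi2.
Proof.
move=> hom1 hom2 coef12; apply: rep_hom_eq => //.
by apply: (orbit_coord_inj repW jW_trans) => t tG; apply: coef12.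
Qed.

Lemma hom_coef_dcoset phi h x h' : hom phi -> h \in HV -> x \in G -> h' \in HW ->
  hom_coef phi (h * x * h')%g = hom_coef phi x.
Proof.
case=> _ _ phi_eqv hHV xG h'HW.
have hG := stab_mem HV_stab hHV; have h'G := stab_mem HW_stab h'HW.
rewrite /hom_coef !invMg !(repM repW) ?groupM ?groupV //.
rewrite -!mulmxA -phi_eqv ?groupV //.
by rewrite (stab_fix repV HV_stab) ?groupV // (stab_row repW HW_stab) ?groupV.
Qed.

Lemma hom_coef_repr phi x : hom phi -> x \in G ->
  hom_coef phi (repr (HV :* x * HW)%g) = hom_coef phi x.
Proof.
move=> hom_phi xG; have [h [h' [hHV h'HW ->]]] := repr_dcoset HV HW x.
exact: hom_coef_dcoset.
Qed.

(* F read as a function of x : G; the value 0 off G is never used. *)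
Definition dcext (F : DC -> K) (x : gT) : K :=
  odflt 0 (omap F (insub (HV :* x * HW)%g)).

Lemma dcextE F (D : DC) x : (HV :* x * HW)%g = val D -> dcext F x = F D.
Proof. by rewrite /dcext => ->; rewrite valK. Qed.

Lemma dcext_dcoset F h x h' : h \in HV -> h' \in HW ->
  dcext F (h * x * h')%g = dcext F x.
Proof. by move=> hHV h'HW; rewrite /dcext dcoset_mul. Qed.

(* (rV g^-1 *m v) jV 0 is, up to a unit, the coordinate of v on rV g *m eV jV,
   which is sent to the vectors rW y *m eW jW weighted by F (HV g^-1 y HW).
   Summing over all of G x G rather than over coset representatives avoids
   choices; idempotency makes the repetitions harmless. *)
Definition hom_of (F : DC -> K) (v : 'cV[K]_n) : 'cV[K]_m :=
  \sum_(g in G) \sum_(y in G)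
    (dcext F (g^-1 * y)%g * (rV g^-1 *m v) jV 0) *: (rW y *m eW jW).

Lemma hom_ofP F : hom (hom_of F).
Proof.
split.
- move=> u v; rewrite /hom_of -big_split; apply: eq_bigr => g _.
  rewrite -big_split; apply: eq_bigr => y _ /=.
  by rewrite mulmxDr mxE mulrDr scalerDl.
- move=> a u; rewrite /hom_of scaler_sumr; apply: eq_bigr => g _.
  rewrite scaler_sumr; apply: eq_bigr => y _.
  by rewrite -scalemxAr mxE scalerA mulrCA.
move=> t v tG; rewrite /hom_of mulmx_sumr (reindex_inj (mulgI t)) /=.
apply: eq_big => [g|g tgG]; first by rewrite groupMl.
rewrite mulmx_sumr (reindex_inj (mulgI t)) /=.
apply: eq_big => [y|y tyG]; first by rewrite groupMl.
have gG : g \in G by rewrite -(groupMl _ tG).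
have yG : y \in G by rewrite -(groupMl _ tG).
have -> : ((t * g)^-1 * (t * y) = g^-1 * y)%g by rewrite invMg -!mulgA mulKg.
rewrite invMg (repM repV) ?groupV // -mulmxA (mulmxA (rV t^-1)).
rewrite (rep_mulVg repV) // mul1mx.
by rewrite -scalemxAr (repM repW) // mulmxA.
Qed.

Lemma hom_coef_hom_of F x : x \in G -> hom_coef (hom_of F) x = dcext F x.
Proof.
move=> xG; rewrite /hom_coef /hom_of mulmx_sumr summxE.
transitivity (\sum_(g in G | g^-1%g \in HV)
               \sum_(y in G | (x^-1 * y)%g \in HW) dcext F x).
  rewrite big_mkcondr; apply: eq_bigr => g gG; rewrite mulmx_sumr summxE.
  have gVG : g^-1%g \in G by rewrite groupV.
  have diagV := rep_delta_diag repV HV_stab gVG.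
  case: ifP => gHV; last first.
    by rewrite big1 // => y yG; rewrite -scalemxAr mxE diagV gHV mulr0 mul0r.
  rewrite big_mkcondr; apply: eq_bigr => y yG.
  have xyG : (x^-1 * y)%g \in G by rewrite groupM ?groupV.
  rewrite -scalemxAr mxE mulmxA -(repM repW) ?groupV //.
  rewrite (rep_delta_diag repW HW_stab xyG) diagV gHV mulr1.
  case: ifP => xyHW; last by rewrite mulr0.
  have -> : (g^-1 * y = g^-1 * x * (x^-1 * y))%g by rewrite -mulgA mulKVg.
  by rewrite dcext_dcoset // mulr1.
rewrite sumr_const_idem; last by exists x; rewrite xG mulVg group1.
by rewrite sumr_const_idem //; exists 1%g; rewrite group1 invg1 group1.
Qed.

Lemma rep_hom_dcosets_bijective :
  exists f : {phi | hom phi} -> (DC -> K), bijective f.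
Proof.
have sHVG : HV \subset G by apply/subsetP => h /(stab_mem HV_stab).
have sHWG : HW \subset G by apply/subsetP => h /(stab_mem HW_stab).
exists (fun phi D => hom_coef (sval phi) (repr (val D))).
exists (fun F => exist _ (hom_of F) (hom_ofP F)).
- case=> phi hom_phi; apply: subset_eq_compat; apply: functional_extensionality.
  apply: (hom_coef_inj (hom_ofP _) hom_phi) => x xG /=.
  have xDC := mem_dcosets HV HW xG.
  rewrite hom_coef_hom_of // (@dcextE _ (exist (fun D => D \in _) _ xDC)) //=.
  exact: hom_coef_repr.
- move=> F; apply: functional_extensionality => -[D DG] /=.
  have [rG repr_D] := dcosets_repr sHVG sHWG DG.
  by rewrite hom_coef_hom_of // (@dcextE _ (exist _ D DG)).
Qed.

End Homomorphisms.
End IdempotentSemifield.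

Unset Implicit Arguments.

Theorem proposition3p20 (gT : finGroupType) (G : {group gT})
    (K : comNzSemiRingType) (K_semifield : semifield K)
    (K_idem : idempotent_semiring K)
    (n m : nat) (rhoV : gT -> 'M[K]_n) (rhoW : gT -> 'M[K]_m)
    (repV : is_rep G rhoV) (repW : is_rep G rhoW)
    (indV : indecomposable G rhoV) (indW : indecomposable G rhoW)
    (HV HW : {group gT})
    (HV_corr : corresponding_subgroup G rhoV HV)
    (HW_corr : corresponding_subgroup G rhoW HW) :
  exists f : {phi : 'cV[K]_n -> 'cV[K]_m | rep_hom G rhoV rhoW phi} ->
             ({D : {set gT} | D \in dcosets HV G HW} -> K),
    bijective f.
Proof.
have [LV [LV_basis HV_stab]] := HV_corr; have [LW [LW_basis HW_stab]] := HW_corr.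
have [jV LV_line] := basis_lineP K_semifield K_idem LV_basis.
have [jW LW_line] := basis_lineP K_semifield K_idem LW_basis.
have HV_act := stabilizer_coord_line K_semifield K_idem repV LV_line HV_stab.
have HW_act := stabilizer_coord_line K_semifield K_idem repW LW_line HW_stab.
have jV_trans := indecomposable_transitive K_semifield K_idem repV jV indV.
have jW_trans := indecomposable_transitive K_semifield K_idem repW jW indW.
exact (rep_hom_dcosets_bijective K_semifield K_idem repV repW
         HV_act HW_act jV_trans jW_trans).
Qed.
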